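(* Let $q>2$, $n\ge 2$, and let $f:H(n,q)\to\mathbb{R}$ be an eigenfunction of $H(n,q)$ with eigenvalue $\lambda_1=n(q-1)-q$, i.e. $f\not\equiv0$ and $Af=\lambda_1 f$ where $A$ is the adjacency matrix of $H(n,q)$. Then $|S(f)|\ge 2(q-1)q^{n-2}$. Moreover, if $|S(f)|=2(q-1)q^{n-2}$, then there exist $i\ne j$ in $\{1,\dots,n\}$, $k,m\in\{0,\dots,q-1\}$ and a constant $c\ne0$ such that $f(x)=c$ for $x\in T_k(i,n)\setminus T_m(j,n)$, $f(x)=-c$ for $x\in T_m(j,n)\setminus T_k(i,n)$, and $f(x)=0$ otherwise.
   Context: The Hamming graph $H(n,q)$ has vertex set $\{0,1,\dots,q-1\}^n$, two words being adjacent iff they differ in exactly one coordinate; its adjacency eigenvalues are $\lambda_m=n(q-1)-qm$, $m=0,\dots,n$. For $f:H(n,q)\to\mathbb{R}$, its support is $S(f)=\{x: f(x)\ne 0\}$. $T_k(i,n)$ denotes the set of vertices of $H(n,q)$ whose $i$-th coordinate equals $k$. *)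

From HB Require Import structures.
From mathcomp Require Import all_boot all_order all_algebra.
Set Implicit Arguments. Unset Strict Implicit. Unset Printing Implicit Defensive.
Import Order.TTheory GRing.Theory Num.Theory.
Local Open Scope ring_scope.

(* Vertices of H(n,q): words of length n over {0,...,q-1}; coordinates are
   indexed by 'I_n (coordinate i+1 of the paper is index i here). *)
Definition hword (n q : nat) := {ffun 'I_n -> 'I_q}.

Definition hadj (n q : nat) (x y : hword n q) : bool :=
  #|[set i : 'I_n | x i != y i]| == 1%N.

Definition hA (R : nzRingType) (n q : nat) (f : hword n q -> R) (x : hword n q) : R :=
  \sum_(y : hword n q | hadj x y) f y.

Definition supp (R : nzRingType) (n q : nat) (f : hword n q -> R) : {set hword n q} :=
  [set x | f x != 0].

Definition T (n q : nat) (k : 'I_q) (i : 'I_n) : {set hword n q} :=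
  [set x : hword n q | x i == k].

Definition eigenfun (R : nzRingType) (n q : nat) (lam : R) (f : hword n q -> R) : Prop :=
  (exists x, f x != 0) /\ (forall x, hA f x = lam * f x).

From HB Require Import structures.
From mathcomp Require Import all_boot all_order all_algebra ring zify.
Import Order.TTheory GRing.Theory Num.Theory.
Local Open Scope ring_scope.

Set Implicit Arguments. Unset Strict Implicit. Unset Printing Implicit Defensive.

(* The operator A + nI sums f over all single-coordinate updates of x (the
   unchanged word counted once per coordinate).  Its top eigenvalue nq has only
   constant eigenfunctions (maximum principle), and for an eigenfunction f of A
   for lambda_1 every difference x |-> f(x with x_i = k) - f(x with x_i = l) is
   such an eigenfunction.  Hence f(x) = sum_i g_i(x_i) with each g_i summing to 0.
   If a single g_i is nonzero, |S(f)| = q^(n-1) |S(g_i)| >= 2 q^(n-1).  Otherwise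
   take two nonzero coordinates i <> j: on each plane obtained by varying x_i and
   x_j, f reads u(a) + v(b) + C with u, v nonconstant.  Rows with distinct values
   of u have disjoint zero sets and every row has a nonzero entry, so such a grid
   has at least 2(q-1) nonzero entries, with equality only for the cross
   c [a = k] - c [b = m].  Summing over the planes gives the bound; in the
   equality case every plane is a cross, and summing a cross over the plane
   shows C = 0 because u and v are centred. *)

Section CoordinateUpdates.
Variables n q : nat.
Implicit Types (x y : hword n q) (i j l : 'I_n) (a b : 'I_q).

Definition upd x i a : hword n q := [ffun l => if l == i then a else x l].

Lemma updE x i a l : upd x i a l = if l == i then a else x l.
Proof. by rewrite ffunE. Qed.

Lemma upd_same x i a : upd x i a i = a.
Proof. by rewrite updE eqxx. Qed.

Lemma upd_other x i a l : l != i -> upd x i a l = x l.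
Proof. by rewrite updE => /negbTE ->. Qed.

Lemma upd_id x i : upd x i (x i) = x.
Proof. by apply/ffunP => l; rewrite updE; case: eqP => // ->. Qed.

Lemma upd_upd x i a b : upd (upd x i a) i b = upd x i b.
Proof. by apply/ffunP => l; rewrite !updE; case: eqP. Qed.

Lemma upd_comm x i j a b : i != j -> upd (upd x i a) j b = upd (upd x j b) i a.
Proof.
move=> ij; apply/ffunP => l; rewrite !updE.
by case: (eqVneq l j) => [->|//]; rewrite eq_sym (negbTE ij).
Qed.

Lemma sum_coord_upd (V : zmodType) (G : 'I_n -> 'I_q -> V) x j a :
  \sum_i G i (upd x j a i) = \sum_i G i (x i) - G j (x j) + G j a.
Proof.
rewrite (bigD1 j) //= [in RHS](bigD1 j) //= upd_same addrC [G j (x j) + _]addrC addrK.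
by congr (_ + _); apply: eq_bigr => i /upd_other ->.
Qed.

Lemma card_hword : #|hword n q| = (q ^ n)%N.
Proof. by rewrite card_ffun !card_ord. Qed.

Lemma hword_upd_ind (P : hword n q -> Prop) (b : hword n q) :
  P b -> (forall y j a, P y -> P (upd y j a)) -> forall x, P x.
Proof.
move=> Pb Pupd x.
pose w m : hword n q := [ffun l : 'I_n => if (l < m)%N then x l else b l].
have -> : x = w n by apply/ffunP => l; rewrite ffunE ltn_ord.
suff: forall m, P (w m) by [].
elim=> [|m IHm]; first by congr P: Pb; apply/ffunP => l; rewrite ffunE.
have [lt_mn | le_nm] := ltnP m n.
  suff -> : w m.+1 = upd (w m) (Ordinal lt_mn) (x (Ordinal lt_mn)) by exact: Pupd.
  apply/ffunP => l; rewrite updE !ffunE ltnS leq_eqVlt.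
  case: (eqVneq l (Ordinal lt_mn)) => [-> /=|lm]; first by rewrite eqxx.
  rewrite (_ : (l == m :> nat) = false) //; apply/negbTE.
  by apply: contraNneq lm => e; rewrite -val_eqE /= e.
congr P: IHm; apply/ffunP => l; rewrite !ffunE ltnS.
by have lt_lm := leq_trans (ltn_ord l) le_nm; rewrite lt_lm (ltnW lt_lm).
Qed.

Lemma diff_coords_upd x i a :
  a != x i -> [set l | x l != upd x i a l] = [set i].
Proof.
move=> a_xi; apply/setP => l; rewrite !inE updE.
by case: (eqVneq l i) => [->|]; rewrite ?eqxx // eq_sym.
Qed.

Lemma hadj_upd x y :
  hadj x y = [exists p : 'I_n * 'I_q, (p.2 != x p.1) && (y == upd x p.1 p.2)].
Proof.
apply/idP/existsP => [/cards1P[i xy_i] | [[i a] /= /andP[a_xi /eqP ->]]].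
  have diff l : (x l != y l) = (l == i).
    by have := congr1 (fun S : {set 'I_n} => l \in S) xy_i; rewrite !inE.
  exists (i, y i); rewrite /= eq_sym diff eqxx; apply/eqP/ffunP => l.
  rewrite updE; case: (eqVneq l i) => [->//|l_i].
  by have := diff l; rewrite (negbTE l_i) => /negbFE/eqP ->.
by rewrite /hadj diff_coords_upd // cards1.
Qed.

Lemma upd_inj x : {in [set p : 'I_n * 'I_q | p.2 != x p.1] &,
  injective (fun p => upd x p.1 p.2)}.
Proof.
move=> [i a] [j b]; rewrite !inE /= => a_xi b_xj e.
have i_j : i = j.
  apply: contraNeq a_xi => ij.
  by have := congr1 (fun y => y i) e; rewrite /= upd_same upd_other // => ->.
by move: e; rewrite i_j => /(congr1 (fun y => y j)); rewrite /= !upd_same => ->.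
Qed.

Lemma hA_sum_upd (R : nzRingType) (f : hword n q -> R) x :
  hA f x = \sum_i \sum_(a | a != x i) f (upd x i a).
Proof.
rewrite /hA pair_big_dep /=.
rewrite (eq_bigl (mem [set p : 'I_n * 'I_q | p.2 != x p.1])); last first.
  by move=> p; rewrite !inE.
rewrite -(big_imset _ (@upd_inj x)) /=.
apply: eq_bigl => y; rewrite hadj_upd; apply/existsP/imsetP => -[p].
  by move=> /andP[p_x /eqP ->]; exists p; rewrite ?inE.
by rewrite inE => p_x ->; exists p; rewrite p_x eqxx.
Qed.

Lemma sum_upd_fiber (phi : hword n q -> nat) i :
  (\sum_x \sum_a phi (upd x i a) = q * \sum_x phi x)%N.
Proof.
pose s (p : hword n q * 'I_q) := (upd p.1 i p.2, p.1 i).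
have sK : involutive s by case=> x a; rewrite /s /= upd_upd upd_same upd_id.
rewrite pair_big /= (reindex_inj (inv_inj sK)) /=.
rewrite (eq_bigr (fun p => phi p.1)); last by case=> x a _; rewrite /s /= upd_upd upd_id.
rewrite -(pair_big xpredT xpredT (fun x (a : 'I_q) => phi x)) /= big_distrr /=.
by apply: eq_bigr => x _; rewrite sum_nat_const card_ord.
Qed.

Definition upd_sum (V : zmodType) (g : hword n q -> V) x := \sum_i \sum_a g (upd x i a).

Lemma upd_sum_hA (R : nzRingType) (f : hword n q -> R) x :
  upd_sum f x = hA f x + f x *+ n.
Proof.
have -> : f x *+ n = \sum_(i < n) f x by rewrite sumr_const card_ord.
rewrite hA_sum_upd -big_split /=.
by apply: eq_bigr => i _; rewrite (bigD1 (x i)) //= upd_id addrC.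
Qed.

Lemma upd_sum_max_const (R : realDomainType) (g : hword n q -> R) :
  (forall x, upd_sum g x = g x *+ (n * q)) -> forall x y, g x = g y.
Proof.
move=> g_mean x; have [xm _ le_gxm] := @arg_maxP _ _ _ x xpredT g isT.
suff g_max z : g z = g xm by move=> y; rewrite !g_max.
apply: (hword_upd_ind (P := fun y => g y = g xm)) => // y j a gy.
have ge0 i (b : 'I_q) : 0 <= g y - g (upd y i b) by rewrite subr_ge0 gy; apply: le_gxm.
have sum0 : \sum_i \sum_b (g y - g (upd y i b)) = 0.
  rewrite (eq_bigr (fun i => g y *+ q - \sum_b g (upd y i b))); last first.
    by move=> i _; rewrite sumrB sumr_const card_ord.
  by rewrite sumrB [X in _ - X]g_mean sumr_const card_ord mulnC mulrnA subrr.
have row0 : \sum_b (g y - g (upd y j b)) = 0.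
  by apply: (psumr_eq0P _ sum0) => // i _; apply: sumr_ge0 => b _.
have /(_ a isT)/eqP := psumr_eq0P (fun b _ => ge0 j b) row0.
by rewrite subr_eq0 => /eqP <-.
Qed.

End CoordinateUpdates.

Lemma upd_sum_coord_sum (R : comNzRingType) n q (g : 'I_n -> 'I_q -> R) K
    (h : hword n q -> R) :
  (forall i, \sum_a g i a = 0) -> (forall x, h x = K + \sum_i g i (x i)) ->
  forall x, upd_sum h x = ((n * q)%:R - q%:R) * h x + q%:R * K.
Proof.
move=> g_centered h_sum x.
have row_sum i : \sum_a h (upd x i a) = q%:R * (h x - g i (x i)).
  transitivity (\sum_a (h x - g i (x i) + g i a)).
    by apply: eq_bigr => a _; rewrite !h_sum sum_coord_upd !addrA.
  by rewrite big_split /= g_centered addr0 sumr_const card_ord mulr_natl.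
have sum_g : \sum_i g i (x i) = h x - K by rewrite h_sum addrC addKr.
rewrite /upd_sum (eq_bigr _ (fun i _ => row_sum i)) -mulr_sumr sumrB sum_g.
by rewrite sumr_const card_ord -mulr_natl natrM; ring.
Qed.

Section Eigenfunctions.
Variables (R : realFieldType) (n q : nat) (f : hword n q -> R).
Hypothesis q_gt0 : (0 < q)%N.
Hypothesis f_eigen : forall x, hA f x = ((n * (q - 1))%:R - q%:R) * f x.

Lemma upd_sum_eigen x : upd_sum f x = ((n * q)%:R - q%:R) * f x.
Proof. by rewrite upd_sum_hA f_eigen -mulr_natl !natrM natrB //; ring. Qed.

Lemma coord_diff_const i k l x y :
  f (upd x i k) - f (upd x i l) = f (upd y i k) - f (upd y i l).
Proof.
pose D z := f (upd z i k) - f (upd z i l).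
apply: (upd_sum_max_const (g := D)) => {}x.
have off_i c : \sum_(j | j != i) \sum_a f (upd (upd x i c) j a)
               = upd_sum f (upd x i c) - \sum_a f (upd x i a).
  rewrite /upd_sum [in RHS](bigD1 i) //= addrAC.
  have -> : \sum_a f (upd (upd x i c) i a) = \sum_a f (upd x i a).
    by apply: eq_bigr => a _; rewrite upd_upd.
  by rewrite subrr add0r.
rewrite /upd_sum (bigD1 i) //=.
rewrite (eq_bigr (fun a => D x)); last by move=> a _; rewrite /D !upd_upd.
rewrite (eq_bigr (fun j =>
  \sum_a f (upd (upd x i k) j a) - \sum_a f (upd (upd x i l) j a))); last first.
  move=> j j_i; rewrite -sumrB; apply: eq_bigr => a _.
  by rewrite /D !(@upd_comm _ _ _ j) // eq_sym.
rewrite [X in _ + X]sumrB !off_i !upd_sum_eigen !sumr_const card_ord /D natrM.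
ring.
Qed.

Lemma eigen_additive x0 x : f x = f x0 + \sum_i (f (upd x0 i (x i)) - f x0).
Proof.
pose e i a := f (upd x0 i a) - f x0.
move: x; apply: (hword_upd_ind (P := fun x => f x = f x0 + \sum_i e i (x i))).
  by rewrite big1 ?addr0 // => i _; rewrite /e upd_id subrr.
move=> y j a fy; rewrite sum_coord_upd !addrA -fy /e.
have -> : f (upd y j a) = f y + (f (upd y j a) - f (upd y j (y j))).
  by rewrite upd_id addrC subrK.
by rewrite (coord_diff_const _ _ _ y x0); ring.
Qed.

Lemma eigen_coord_decomp (x0 : hword n q) :
  exists g : 'I_n -> 'I_q -> R,
    (forall i, \sum_a g i a = 0) /\ forall x, f x = \sum_i g i (x i).
Proof.
pose e i a := f (upd x0 i a) - f x0.
pose m i := (\sum_a e i a) / q%:R.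
pose g i a := e i a - m i.
pose K := f x0 + \sum_i m i.
have q_neq0 : q%:R != 0 :> R by rewrite pnatr_eq0 -lt0n.
have g_centered i : \sum_a g i a = 0.
  by rewrite sumrB sumr_const card_ord -mulr_natr divfK // subrr.
have f_K x : f x = K + \sum_i g i (x i).
  by rewrite (eigen_additive x0 x) [in RHS]sumrB /K; ring.
have qK0 : q%:R * K = 0.
  apply: (@addrI _ (((n * q)%:R - q%:R) * f x0)).
  by rewrite addr0 -(upd_sum_coord_sum g_centered f_K) upd_sum_eigen.
exists g; split => // x.
move: qK0 => /eqP; rewrite mulf_eq0 (negbTE q_neq0) => /eqP K0.
by rewrite f_K K0 add0r.
Qed.

End Eigenfunctions.

Definition cross_pattern (V : zmodType) q (k m : 'I_q) (c : V) (a b : 'I_q) : V :=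
  c *+ (a == k) - c *+ (b == m).

Section Grid.
Variables (V : zmodType) (q : nat) (u v : 'I_q -> V) (C : V).

Definition row_supp a := [set b | u a + v b + C != 0].

Lemma row_supp_cover a a' : u a != u a' -> row_supp a :|: row_supp a' = setT.
Proof.
move=> ua; apply/setP => b; rewrite !inE -negb_and.
apply: contra ua => /andP[/eqP e /eqP e'].
by apply/eqP/(addIr (v b + C)); rewrite !addrA e e'.
Qed.

Lemma card_row_supp_pair a a' :
  u a != u a' -> (q <= #|row_supp a| + #|row_supp a'|)%N.
Proof.
by move/row_supp_cover => cover; rewrite -cardsUI cover cardsT card_ord leq_addr.
Qed.

Hypothesis v_nonconst : exists b b', v b != v b'.

Lemma row_supp_gt0 a : (0 < #|row_supp a|)%N.
Proof.
have [b [b' vb]] := v_nonconst; apply/card_gt0P.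
have [e|nz] := eqVneq (u a + v b + C) 0; last by exists b; rewrite inE nz.
exists b'; rewrite inE; apply: contra vb => /eqP e'.
by apply/eqP/(addIr C)/(addrI (u a)); rewrite !addrA e e'.
Qed.

Lemma exists_thin_row :
  (\sum_a #|row_supp a| < 2 * q)%N -> exists a0, #|row_supp a0| = 1%N.
Proof.
have [a0 /eqP|thick] := pickP (fun a => #|row_supp a| == 1%N); first by exists a0.
rewrite ltnNge => /negP[].
have -> : (2 * q = \sum_(a < q) 2)%N by rewrite sum_nat_const card_ord mulnC.
by apply: leq_sum => a _; rewrite ltn_neqAle eq_sym thick row_supp_gt0.
Qed.

Lemma sum_row_supp_off k :
  (q - 1 <= \sum_(a < q | a != k) #|row_supp a|
     ?= iff [forall (a | a != k), 1%N == #|row_supp a|])%N.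
Proof.
have := leqif_sum (fun a (_ : a != k) => leqif_eq (row_supp_gt0 a)).
by rewrite sum_nat_const cardC1 card_ord muln1 subn1.
Qed.

Hypothesis u_nonconst : exists a a', u a != u a'.

Lemma exists_other_value a0 : exists k, u k != u a0.
Proof.
have [a [a' ua]] := u_nonconst.
by have [e|] := eqVneq (u a) (u a0); [exists a'; rewrite -e eq_sym | exists a].
Qed.

Lemma grid_count_ge : (2 * (q - 1) <= \sum_a #|row_supp a|)%N.
Proof.
have [ge_2q|/exists_thin_row[a0 thin]] := leqP (2 * q) (\sum_a #|row_supp a|).
  by apply: leq_trans ge_2q; rewrite leq_mul2l leq_subr orbT.
have [k uk] := exists_other_value a0.
have := card_row_supp_pair uk; rewrite thin (bigD1 k) //= => ge_k.
have [ge_off _] := sum_row_supp_off k.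
by rewrite mul2n -addnn leq_add // leq_subLR addnC.
Qed.

Hypothesis q_gt2 : (2 < q)%N.

Lemma cross_of_thin_rows k a0 :
  u k != u a0 -> #|row_supp k| = (q - 1)%N ->
  (forall a, a != k -> #|row_supp a| = 1%N) ->
  exists m c, c != 0 /\ forall a b, u a + v b + C = cross_pattern k m c a b.
Proof.
move=> uk supp_k thin.
have a0k : a0 != k by apply: contraNneq uk => ->.
have u_off a : a != k -> u a = u a0.
  move=> ak; apply/eqP; apply: contraLR q_gt2 => ua.
  by have := card_row_supp_pair ua; rewrite !thin // -leqNgt.
have [m supp_a0] : exists m, row_supp a0 = [set m] by apply/cards1P; rewrite thin.
have zero_a0 b : b != m -> u a0 + v b + C = 0.
  move=> bm; have : b \notin row_supp a0 by rewrite supp_a0 inE.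
  by rewrite inE negbK => /eqP.
have zero_km : u k + v m + C = 0.
  have m_a0 : m \in row_supp a0 by rewrite supp_a0 set11.
  have := cardsUI (row_supp k) (row_supp a0).
  rewrite row_supp_cover // cardsT card_ord supp_k thin //.
  rewrite subnK ?(ltnW (ltn_trans _ q_gt2)) //.
  move/(canRL (addKn _)); rewrite subnn => /cards0_eq meet0.
  have := in_set0 m; rewrite -meet0 in_setI m_a0 andbT inE => /negbT.
  by rewrite negbK => /eqP.
exists m, (u k - u a0); split; first by rewrite subr_eq0.
move=> a b; rewrite /cross_pattern -[u a](subrK (u a0)) -!addrA addrA.
congr (_ + _).
  case: (eqVneq a k) => [->|/u_off ->]; first by rewrite mulr1n.
  by rewrite subrr mulr0n.
case: (eqVneq b m) => [->|/zero_a0]; last by rewrite addrA => ->; rewrite mulr0n oppr0.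
by rewrite mulr1n opprB -[RHS]addr0 -zero_km !addrA subrK.
Qed.

Lemma grid_count_eq :
  (\sum_a #|row_supp a| = 2 * (q - 1))%N ->
  exists k m c, c != 0 /\ forall a b, u a + v b + C = cross_pattern k m c a b.
Proof.
move=> tight.
have /exists_thin_row[a0 thin] : (\sum_a #|row_supp a| < 2 * q)%N.
  by rewrite tight ltn_mul2l /= subn1 prednK ?ltn_pred // (ltn_trans _ q_gt2).
have [k uk] := exists_other_value a0.
move: tight; rewrite (bigD1 k) //=.
set off := (\sum_(a < q | a != k) _)%N; set rk := #|row_supp k| => tight.
have [ge_off off_eq] : (q - 1 <= off ?= iff _)%N := sum_row_supp_off k.
have ge_k : (q <= rk + 1)%N by rewrite -thin; exact: card_row_supp_pair uk.
have [supp_k /esym/eqP] : rk = (q - 1)%N /\ off = (q - 1)%N by clearbody off rk; lia.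
rewrite off_eq => /forall_inP thin_off.
have thin_off' a : a != k -> #|row_supp a| = 1%N by move/thin_off/eqP.
by have [m [c cross]] := cross_of_thin_rows uk supp_k thin_off'; exists k, m, c.
Qed.

End Grid.

Lemma cross_pattern_centered_const0 (R : numDomainType) q (u v : 'I_q -> R) C k m c :
  \sum_a u a = 0 -> \sum_b v b = 0 ->
  (forall a b, u a + v b + C = cross_pattern k m c a b) -> C = 0.
Proof.
move=> u0 v0 cross.
have sum_ind (j : 'I_q) : \sum_a c *+ (a == j) = c.
  by rewrite (bigD1 j) //= eqxx big1 ?addr0 // => a /negbTE ->.
have lhs : \sum_a \sum_b (u a + v b + C) = C *+ (q * q).
  under eq_bigr do rewrite !big_split /= v0 addr0 !sumr_const card_ord.
  by rewrite big_split /= sumrMnl u0 mul0rn add0r sumr_const card_ord -mulrnA.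
have rhs : \sum_a \sum_b cross_pattern k m c a b = 0.
  under eq_bigr do rewrite sumrB sumr_const card_ord sum_ind.
  by rewrite sumrB sumrMnl sum_ind sumr_const card_ord subrr.
have /eqP : C *+ (q * q) = 0.
  by rewrite -lhs -[RHS]rhs; apply: eq_bigr => a _; apply: eq_bigr => b _; apply: cross.
have q_gt0 : (0 < q)%N := leq_ltn_trans (leq0n k) (ltn_ord k).
by rewrite mulrn_eq0 muln_eq0 orbb gtn_eqF // => /eqP.
Qed.

Lemma sum_bool_card (T : finType) (P : pred T) :
  (\sum_x (P x : nat))%N = #|[set x | P x]|.
Proof.
by rewrite -sum1dep_card [RHS]big_mkcond; apply: eq_bigr => x _; case: (P x).
Qed.

Lemma centered_nonconst (R : numDomainType) q (u : 'I_q -> R) a :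
  \sum_b u b = 0 -> u a != 0 -> exists b b', u b != u b'.
Proof.
move=> u0 ua; have [b ub|const] := pickP (fun b => u b != u a); first by exists b, a.
move: u0; rewrite (eq_bigr (fun=> u a)) => [|b _]; last by apply/eqP/negbFE/const.
rewrite sumr_const card_ord => /eqP; rewrite mulrn_eq0 (negbTE ua) orbF.
by rewrite gtn_eqF // (leq_ltn_trans _ (ltn_ord a)).
Qed.

Lemma centered_card_supp_ge2 (V : zmodType) q (u : 'I_q -> V) a :
  \sum_b u b = 0 -> u a != 0 -> (2 <= #|[set b | u b != 0%R]|)%N.
Proof.
move=> u0 ua; have [b /andP[ba ub]|only_a] := pickP (fun b => (b != a) && (u b != 0)).
  have := cards2 b a; rewrite ba => <-; apply: subset_leq_card.
  by apply/subsetP => c; rewrite !inE => /orP[] /eqP ->.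
move: u0; rewrite (bigD1 a) //= big1 ?addr0 => [/eqP|b ba]; first by rewrite (negbTE ua).
by have := only_a b; rewrite ba => /negbFE/eqP.
Qed.

Lemma card_supp_single_coord (R : nzRingType) n q (f : hword n q -> R)
    (h : 'I_q -> R) i :
  (forall x, f x = h (x i)) -> (q * #|supp f| = q ^ n * #|[set a | h a != 0%R]|)%N.
Proof.
move=> f_i; rewrite /supp -(sum_bool_card (fun x => f x != 0)).
rewrite -(sum_upd_fiber (fun x => (f x != 0%R : nat)) i).
rewrite (eq_bigr (fun=> #|[set a | h a != 0%R]|)) ?sum_nat_const ?card_hword // => x _.
by rewrite -sum_bool_card; apply: eq_bigr => a _; rewrite f_i upd_same.
Qed.

Lemma single_coord_card_supp_ge (R : nzRingType) n q (f : hword n q -> R)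
    (h : 'I_q -> R) i :
  (forall x, f x = h (x i)) -> \sum_a h a = 0 -> (exists a, h a != 0) ->
  (2 * q ^ n.-1 <= #|supp f|)%N.
Proof.
move=> f_i h0 [a ha]; have q_gt0 : (0 < q)%N by apply: leq_ltn_trans (ltn_ord a).
rewrite -(leq_pmul2l q_gt0) (card_supp_single_coord f_i) mulnCA -expnS prednK; last first.
  by apply: leq_ltn_trans (ltn_ord i).
by rewrite mulnC leq_mul2l (centered_card_supp_ge2 h0 ha) orbT.
Qed.

Section TwoCoordinates.
Variables (R : numDomainType) (n q : nat).
Variables (f : hword n q -> R) (g : 'I_n -> 'I_q -> R).
Hypothesis g_centered : forall i, \sum_a g i a = 0.
Hypothesis f_sum : forall x, f x = \sum_i g i (x i).
Variables i j : 'I_n.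
Hypothesis i_neq_j : i != j.

Let rest (x : hword n q) := \sum_(l | (l != i) && (l != j)) g l (x l).

Lemma f_on_plane x a b : f (upd (upd x i a) j b) = g i a + g j b + rest x.
Proof.
rewrite f_sum (bigD1 i) //= (bigD1 j) 1?eq_sym //= addrA upd_same.
rewrite upd_other ?upd_same //; congr (_ + _).
by apply: eq_bigr => l /andP[l_i l_j]; rewrite !upd_other.
Qed.

Lemma card_supp_fibers :
  (q * (q * #|supp f|) = \sum_x \sum_a #|row_supp (g i) (g j) (rest x) a|)%N.
Proof.
rewrite -sum_bool_card -(sum_upd_fiber (fun x => (f x != 0%R : nat)) j).
rewrite -(sum_upd_fiber (fun y => \sum_b (f (upd y j b) != 0%R : nat))%N i).
apply: eq_bigr => x _; apply: eq_bigr => a _; rewrite sum_bool_card.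
by apply: eq_card => b; rewrite !inE f_on_plane.
Qed.

Hypotheses (gi_nz : exists a, g i a != 0) (gj_nz : exists b, g j b != 0).

Let q_gt0 : (0 < q)%N.
Proof. by case: gi_nz => a _; apply: leq_ltn_trans (ltn_ord a). Qed.

Let qn : (q ^ n = q * (q * q ^ (n - 2)))%N.
Proof.
have n_ge2 : (2 <= n)%N.
  by move: i_neq_j; rewrite -val_eqE /=; have := ltn_ord i; have := ltn_ord j; lia.
by rewrite -!expnS; congr (q ^ _)%N; lia.
Qed.

Let fiber_count_ge x : (2 * (q - 1) <= \sum_a #|row_supp (g i) (g j) (rest x) a|)%N.
Proof.
have [a gi] := gi_nz; have [b gj] := gj_nz.
by apply: grid_count_ge; [exact: centered_nonconst gj | exact: centered_nonconst gi].
Qed.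

Lemma two_coords_card_supp_ge : (2 * (q - 1) * q ^ (n - 2) <= #|supp f|)%N.
Proof.
rewrite -(leq_pmul2l q_gt0) -(leq_pmul2l q_gt0) card_supp_fibers.
have -> : (q * (q * (2 * (q - 1) * q ^ (n - 2))) = \sum_(x : hword n q) 2 * (q - 1))%N.
  by rewrite sum_nat_const card_hword qn; lia.
exact: leq_sum.
Qed.

Hypothesis q_gt2 : (2 < q)%N.

Lemma two_coords_card_supp_eq :
  #|supp f| = (2 * (q - 1) * q ^ (n - 2))%N ->
  exists k m c, c != 0 /\ forall x, f x = cross_pattern k m c (x i) (x j).
Proof.
move=> tight.
have /forall_inP fibers_tight :
    [forall (x | true), 2 * (q - 1) == \sum_a #|row_supp (g i) (g j) (rest x) a|]%N.
  rewrite -(leqif_sum (fun x _ => leqif_eq (fiber_count_ge x))).2 -card_supp_fibers tight.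
  by rewrite sum_nat_const card_hword qn; apply/eqP; lia.
have fiber_cross x : exists k m c, c != 0 /\
    forall a b, g i a + g j b + rest x = cross_pattern k m c a b.
  have [a gi] := gi_nz; have [b gj] := gj_nz.
  apply: grid_count_eq; last exact/esym/eqP/fibers_tight.
  - exact: centered_nonconst gj.
  - exact: centered_nonconst gi.
  - exact: q_gt2.
have rest0 x : rest x = 0.
  have [k [m [c [_ cross]]]] := fiber_cross x.
  exact: cross_pattern_centered_const0 (g_centered i) (g_centered j) cross.
have [a _] := gi_nz; have [k [m [c [c0 cross]]]] := fiber_cross [ffun=> a].
exists k, m, c; split => // x.
have := f_on_plane x (x i) (x j); rewrite !upd_id rest0 addr0 => ->.
by rewrite -cross rest0 addr0.
Qed.

End TwoCoordinates.

Theorem theorem3 (R : realFieldType) (n q : nat) (hq : (2 < q)%N) (hn : (2 <= n)%N)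
    (f : hword n q -> R)
    (hf : eigenfun ((n * (q - 1))%:R - q%:R) f) :
  (2 * (q - 1) * q ^ (n - 2) <= #|supp f|)%N /\
  (#|supp f| = (2 * (q - 1) * q ^ (n - 2))%N ->
   exists (i j : 'I_n) (k m : 'I_q) (c : R),
     [/\ i != j, c != 0 &
       forall x : hword n q,
         f x = (if x \in T k i :\: T m j then c
                else if x \in T m j :\: T k i then - c
                else 0)]).
Proof.
case: hf => [[x0 fx0] f_eigen].
have q_gt0 : (0 < q)%N by apply: ltn_trans hq.
have [g [g_centered f_sum]] := eigen_coord_decomp q_gt0 f_eigen x0.
have [i gi_nz] : exists i, exists a, g i a != 0.
  have [i gi|g0] := pickP (fun i => g i (x0 i) != 0); first by exists i, (x0 i).
  by move: fx0; rewrite f_sum big1 ?eqxx // => i _; apply/eqP/negbFE/g0.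
have [j /andP[j_i /existsP gj_nz]|single] :=
  pickP (fun j => (j != i) && [exists a, g j a != 0]).
  have i_j : i != j by rewrite eq_sym.
  split; first by have := two_coords_card_supp_ge g_centered f_sum i_j gi_nz gj_nz.
  move/(two_coords_card_supp_eq g_centered f_sum i_j gi_nz gj_nz hq).
  move=> [k [m [c [c0 f_cross]]]].
  exists i, j, k, m, c; split => // x; rewrite f_cross /cross_pattern !inE.
  by case: (x i == k); case: (x j == m); rewrite /= ?subrr ?subr0 ?sub0r.
have f_i x : f x = g i (x i).
  rewrite f_sum (bigD1 i) //= big1 ?addr0 // => l l_i.
  have := single l; rewrite l_i /= => /negbT; rewrite negb_exists.
  by move=> /forallP/(_ (x l))/negbNE/eqP.
have := single_coord_card_supp_ge f_i (g_centered i) gi_nz.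
have -> : (q ^ n.-1 = q * q ^ (n - 2))%N by rewrite -expnS; congr (q ^ _)%N; lia.
have pos : (0 < q ^ (n - 2))%N by rewrite expn_gt0 q_gt0.
move=> ge; have strict : (2 * (q - 1) * q ^ (n - 2) < #|supp f|)%N by nia.
by split=> [|tight]; [exact: ltnW | rewrite tight ltnn in strict].
Qed.
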